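(* Let $f$ be a $\mathbf{\Sigma}$-piecewise linear function on $N_{\mathbb{R}}$ and $\mathcal L=\sum_{i=1}^n f(v_i)E_i\in\mathrm{Pic}_{\mathbb{R}}(\mathbb{P}_{\mathbf{\Sigma}})$. Let $s\in\{1,\dots,n\}$. Then there exists a $\mathbf{\Sigma}$-piecewise linear function $g$ on $N_{\mathbb{R}}$ such that: (i) $\mathcal L=\sum_{i=1}^n g(v_i)E_i$ in $\mathrm{Pic}_{\mathbb{R}}(\mathbb{P}_{\mathbf{\Sigma}})$; (ii) $g(v_s)=0$; (iii) $g(v_i)\ne0$ for every $i$ with $v_i\notin\mathbb{R}v_s$; (iv) if $t\ne s$ and $v_t\in\mathbb{R}v_s$, then $g(v_t)=0$ if and only if the restriction of $f$ to the line $\mathbb{R}v_s$ is linear.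
   Context: $N$ is a lattice of rank $m$, $M=\mathrm{Hom}(N,\mathbb{Z})$, $N_{\mathbb{R}}=N\otimes\mathbb{R}$, $M_{\mathbb{R}}=M\otimes\mathbb{R}$; $\Sigma$ is a complete simplicial fan in $N_{\mathbb{R}}$ with $n$ rays and $v_i\in N$ a nonzero lattice point on the $i$-th ray ($\mathbf{\Sigma}=(\Sigma,\{v_i\})$), with associated toric DM stack $\mathbb{P}_{\mathbf{\Sigma}}$. $\mathrm{Pic}_{\mathbb{R}}(\mathbb{P}_{\mathbf{\Sigma}})=\mathrm{Pic}(\mathbb{P}_{\mathbf{\Sigma}})\otimes\mathbb{R}$ is identified with $\mathbb{R}^n/\{\sum_i w(v_i)E_i:w\in M_{\mathbb{R}}\}$, where $E_1,\dots,E_n$ is the standard basis of $\mathbb{R}^n$. A $\mathbf{\Sigma}$-piecewise linear function is a continuous function $N_{\mathbb{R}}\to\mathbb{R}$ whose restriction to each cone of $\Sigma$ is linear. *)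

(* N = Z^m, N_R = 'rV[R]_m, M_R = 'cV[R]_m (pairing x *m w). *)
From HB Require Import structures.
From mathcomp Require Import all_boot all_order all_algebra.
Set Implicit Arguments. Unset Strict Implicit. Unset Printing Implicit Defensive.
Import Order.TTheory GRing.Theory Num.Theory.
Local Open Scope ring_scope.

Section Fans.
Variables (R : realFieldType) (m n : nat).

Definition in_cone (v : 'I_n -> 'rV[R]_m) (sigma : {set 'I_n}) (x : 'rV[R]_m) : Prop :=
  exists c : 'I_n -> R,
    (forall i, 0 <= c i) /\ (forall i, i \notin sigma -> c i = 0) /\
    x = \sum_i c i *: v i.

Definition lin_indep_on (v : 'I_n -> 'rV[R]_m) (sigma : {set 'I_n}) : Prop :=
  forall c : 'I_n -> R, \sum_(i in sigma) c i *: v i = 0 ->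
    forall i, i \in sigma -> c i = 0.

Definition lattice_point (x : 'rV[R]_m) : Prop :=
  exists z : 'I_m -> int, x = \row_j (z j)%:~R.

(* (Sigma, {v_i}) : a complete simplicial fan whose cones are indexed by the
   sets of their rays; the i-th ray is generated by the nonzero lattice
   point v i. *)
Record complete_simplicial_fan (v : 'I_n -> 'rV[R]_m) (Sigma : {set {set 'I_n}}) : Prop := {
  fan_nonzero : forall i, v i != 0;
  fan_lattice : forall i, lattice_point (v i);
  fan_simplicial : forall sigma, sigma \in Sigma -> lin_indep_on v sigma;
  fan_faces : forall sigma tau : {set 'I_n}, sigma \in Sigma -> tau \subset sigma -> tau \in Sigma;
  fan_inter : forall (sigma tau : {set 'I_n}) x, sigma \in Sigma -> tau \in Sigma ->
      in_cone v sigma x -> in_cone v tau x -> in_cone v (sigma :&: tau) x;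
  fan_rays : forall i, [set i] \in Sigma;
  fan_complete : forall x, exists2 sigma, sigma \in Sigma & in_cone v sigma x
}.

Definition piecewise_linear (v : 'I_n -> 'rV[R]_m) (Sigma : {set {set 'I_n}})
    (f : 'rV[R]_m -> R) : Prop :=
  forall sigma, sigma \in Sigma ->
    exists w : 'cV[R]_m, forall x, in_cone v sigma x -> f x = (x *m w) 0 0.

(* equality in Pic_R = R^n / {(w(v_i))_i : w in M_R} *)
Definition pic_eq (v : 'I_n -> 'rV[R]_m) (a b : 'I_n -> R) : Prop :=
  exists w : 'cV[R]_m, forall i, a i - b i = (v i *m w) 0 0.

Definition on_line (x y : 'rV[R]_m) : Prop := exists c : R, y = c *: x.

Definition linear_on_line (f : 'rV[R]_m -> R) (x : 'rV[R]_m) : Prop :=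
  exists a : R, forall t : R, f (t *: x) = t * a.

End Fans.

(* Put g := f - <., w> for a linear functional w: g is again Sigma-piecewise
   linear and defines the same class in Pic_R.  Choose w with <v_s, w> = f(v_s)
   and, perturbing w by functionals that vanish on v_s, with <v_i, w> <> f(v_i)
   for each v_i off the line R v_s; each such v_i excludes only finitely many
   perturbations.  A ray v_t = c v_s with t <> s has c < 0, for otherwise v_t
   would lie in two distinct rays of the fan.  Then g(v_t) = f(v_t) - c f(v_s),
   and since f is linear on each of the two opposite rays, this vanishes iff f
   is linear on the line R v_s. *)

From HB Require Import structures.
From mathcomp Require Import all_boot all_order all_algebra.
Import Order.TTheory GRing.Theory Num.Theory.
Set Implicit Arguments.
Unset Strict Implicit.
Unset Printing Implicit Defensive.
Local Open Scope ring_scope.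

Lemma exists_separating_functional (F : fieldType) (k m : nat)
    (A : 'M[F]_(k, m)) (b : 'rV[F]_m) :
  ~~ (b <= A)%MS -> exists u : 'cV[F]_m, A *m u = 0 /\ (b *m u) 0 0 != 0.
Proof.
rewrite submxE => /matrix0Pn [i [j bAj]].
exists (cokermx A *m delta_mx j 0); split; first by rewrite mulmxA mulmx_coker mul0mx.
by rewrite mulmxA -colE mxE -(ord1 i).
Qed.

Lemma exists_nonzero_notin (R : numDomainType) (l : seq R) :
  exists2 mu : R, mu != 0 & mu \notin l.
Proof.
exists (1 + \sum_(x <- l) `|x|); first by rewrite gt_eqF // ltr_pwDl // sumr_ge0.
apply/negP => mu_l.
have : `|1 + \sum_(x <- l) `|x| | <= \sum_(x <- l) `|x|.
  by rewrite [X in _ <= X](big_rem _ mu_l) lerDl sumr_ge0.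
by rewrite ger0_norm ?addr_ge0 ?sumr_ge0 // gerDr ler10.
Qed.

Section Avoidance.
Variables (R : numFieldType) (m : nat).
Implicit Types (a x : 'rV[R]_m) (w d : 'cV[R]_m).

Lemma pairing_shift x w d (mu : R) :
  (x *m (w + mu *: d)) 0 0 = (x *m w) 0 0 + mu * (x *m d) 0 0.
Proof. by rewrite mulmxDr -scalemxAr !mxE. Qed.

Lemma exists_pairing_eq a (c : R) : a != 0 -> exists w, (a *m w) 0 0 = c.
Proof.
rewrite -(submx0 a) => /exists_separating_functional [d [_ ad_neq0]].
by exists ((c / (a *m d) 0 0) *: d); rewrite -scalemxAr mxE divfK.
Qed.

Lemma exists_pairing_avoiding a (c : R) (I : eqType) (u : I -> 'rV[R]_m)
    (y : I -> R) (l : seq I) : a != 0 ->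
  exists w, (a *m w) 0 0 = c /\
    {in l, forall i, ~~ (u i <= a)%MS -> (u i *m w) 0 0 != y i}.
Proof.
move=> a_neq0; elim: l => [|k l [w [aw avoid_l]]].
  by have [w aw] := exists_pairing_eq c a_neq0; exists w.
have [/andP [uk_a /eqP ukw] | good_k] :=
  boolP (~~ (u k <= a)%MS && ((u k *m w) 0 0 == y k)); last first.
  exists w; split=> // i; rewrite inE => /predU1P [-> uk_a|]; last exact: avoid_l.
  by apply: contraNN good_k => ->; rewrite uk_a.
have [d [ad_eq0 ukd_neq0]] := exists_separating_functional uk_a.
have [mu mu_neq0 mu_notin] := exists_nonzero_notin
  [seq (y i - (u i *m w) 0 0) / (u i *m d) 0 0 | i <- l].
exists (w + mu *: d); split.
  by rewrite pairing_shift ad_eq0 [in mu * _]mxE mulr0 addr0.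
move=> i; rewrite inE pairing_shift => /predU1P [-> _|i_l ui_a].
  by rewrite ukw -subr_eq0 addrC addKr mulf_neq0.
apply: contraNN mu_notin => /eqP ui_hit; apply/mapP; exists i => //.
have uid_neq0 : (u i *m d) 0 0 != 0.
  by apply: contraNneq (avoid_l i i_l ui_a) => uid0; rewrite -ui_hit uid0 mulr0 addr0.
by rewrite -ui_hit addrC addKr mulfK.
Qed.

End Avoidance.

Lemma linear_on_line_opposite (R : realFieldType) (m : nat) (f : 'rV[R]_m -> R)
    (x : 'rV[R]_m) (c : R) : c < 0 ->
  (forall t, 0 <= t -> f (t *: x) = t * f x) ->
  (forall t, 0 <= t -> f (t *: (c *: x)) = t * f (c *: x)) ->
  f (c *: x) = c * f x <-> linear_on_line f x.
Proof.
move=> c_lt0 f_ray f_opp_ray; split=> [f_cx | [a f_lin]]; last first.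
  by rewrite f_lin -[x]scale1r f_lin mul1r.
exists (f x) => t; have [t_ge0 | t_lt0] := leP 0 t; first exact: f_ray.
have tc_ge0 : 0 <= t / c by rewrite mulr_le0 ?invr_le0 ?ltW.
have c_neq0 : c != 0 := ltr0_neq0 c_lt0.
by rewrite -[in t *: x](divfK c_neq0 t) -scalerA f_opp_ray // f_cx mulrA divfK.
Qed.

Section Fan.
Variables (R : realFieldType) (m n : nat) (v : 'I_n -> 'rV[R]_m).
Variable Sigma : {set {set 'I_n}}.
Hypothesis fanSigma : complete_simplicial_fan v Sigma.

Lemma in_cone_ray i (t : R) : 0 <= t -> in_cone v [set i] (t *: v i).
Proof.
move=> t_ge0; exists (fun k => if k == i then t else 0); split; [|split].
- by move=> k; case: (k == i).
- by move=> k; rewrite in_set1 => /negbTE ->.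
- by rewrite (bigD1 i) //= eqxx big1 ?addr0 // => k /negbTE ->; rewrite scale0r.
Qed.

Lemma piecewise_linear_ray f i (t : R) : piecewise_linear v Sigma f ->
  0 <= t -> f (t *: v i) = t * f (v i).
Proof.
move=> f_pl t_ge0; have [w f_lin] := f_pl _ (fan_rays fanSigma i).
have v_i_ray : in_cone v [set i] (v i) by rewrite -[v i]scale1r; apply: in_cone_ray.
by rewrite (f_lin _ (in_cone_ray i t_ge0)) (f_lin _ v_i_ray) -scalemxAl mxE.
Qed.

Lemma piecewise_linear_subr_pairing f (w : 'cV[R]_m) : piecewise_linear v Sigma f ->
  piecewise_linear v Sigma (fun x => f x - (x *m w) 0 0).
Proof.
move=> f_pl sigma sigma_fan; have [w' f_lin] := f_pl _ sigma_fan.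
by exists (w' - w) => x x_sigma; rewrite f_lin // mulmxBr [RHS]mxE [X in _ = _ + X]mxE.
Qed.

Lemma collinear_ray_opposite s t (c : R) : t != s -> v t = c *: v s -> c < 0.
Proof.
move=> t_neq_s vt; rewrite ltNge; apply/negP => c_ge0.
have vt_s : in_cone v [set s] (v t) by rewrite vt; apply: in_cone_ray.
have vt_t : in_cone v [set t] (v t) by rewrite -[v t]scale1r; apply: in_cone_ray.
have [d [_ [d_supp vt_sum]]] :=
  fan_inter fanSigma (fan_rays fanSigma s) (fan_rays fanSigma t) vt_s vt_t.
have vt_eq0 : v t = 0.
  rewrite vt_sum big1 // => k _; rewrite d_supp ?scale0r // !inE.
  by apply: contraNN t_neq_s => /andP [/eqP <- /eqP ->].
by move: (fan_nonzero fanSigma t); rewrite vt_eq0 eqxx.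
Qed.

End Fan.

Theorem lemma4p1 (R : realFieldType) (m n : nat) (v : 'I_n -> 'rV[R]_m)
    (Sigma : {set {set 'I_n}}) (HSigma : complete_simplicial_fan v Sigma)
    (f : 'rV[R]_m -> R) (Hf : piecewise_linear v Sigma f) (s : 'I_n) :
  exists g : 'rV[R]_m -> R,
    [/\ piecewise_linear v Sigma g,
        pic_eq v (fun i => f (v i)) (fun i => g (v i)),
        g (v s) = 0,
        (forall i, ~ on_line (v s) (v i) -> g (v i) <> 0) &
        (forall t, t != s -> on_line (v s) (v t) ->
           (g (v t) = 0 <-> linear_on_line f (v s)))].
Proof.
have [w [vs_w avoid]] := exists_pairing_avoiding (f (v s)) v (fun i => f (v i))
  (enum 'I_n) (fan_nonzero HSigma s).
exists (fun x => f x - (x *m w) 0 0); split.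
- exact: piecewise_linear_subr_pairing.
- by exists w => i; rewrite opprB addrC subrK.
- by rewrite vs_w subrr.
- move=> i vi_off_line; apply/eqP; rewrite subr_eq0 eq_sym avoid ?mem_enum //.
  by apply/negP => /sub_rVP.
- move=> t t_neq_s [c vt].
  have c_lt0 := collinear_ray_opposite HSigma t_neq_s vt.
  have ray := piecewise_linear_ray HSigma _ Hf.
  apply: (iff_trans _ (linear_on_line_opposite c_lt0 (ray s) _));
    rewrite -vt; last exact: ray.
  have -> : (v t *m w) 0 0 = c * f (v s) by rewrite vt -scalemxAl mxE vs_w.
  by split=> [/eqP | ->]; rewrite ?subrr // subr_eq0 => /eqP.
Qed.
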